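(* Let $a\in\mathbb{Z}_{25}$ satisfy $2a^2-2a+1\equiv 0\pmod{25}$ and let $(\mathbb{Z}_{25},\cdot)$ be the quadratical quasigroup with $x\cdot y=ax+(1-a)y \pmod{25}$. Then $(\mathbb{Z}_{25},\cdot)$ is not isomorphic to any of $Q1\times Q1$, $Q1\times (Q1)^*$, $(Q1)^*\times Q1$, $(Q1)^*\times(Q1)^*$.
   Context: $Q1$ denotes (up to isomorphism) the quadratical quasigroup $(\mathbb{Z}_5,\cdot)$ with $x\cdot y=4x+2y\pmod 5$, and $(Q1)^*$ its dual, isomorphic to $(\mathbb{Z}_5,\circ)$ with $x\circ y=2x+4y\pmod 5$ (the dual of a groupoid $(Q,\cdot)$ is $(Q,* )$ with $x*y=y\cdot x$). Products are direct products with componentwise operation. A quadratical quasigroup is a quasigroup satisfying $xy\cdot x=zx\cdot yz$. *)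

From mathcomp Require Import all_boot all_algebra.
Set Implicit Arguments. Unset Strict Implicit. Unset Printing Implicit Defensive.
Import GRing.Theory.
Local Open Scope ring_scope.

Definition groupoid_iso (S T : Type) (opS : S -> S -> S) (opT : T -> T -> T)
  (f : S -> T) : Prop :=
  bijective f /\ forall x y, f (opS x y) = opT (f x) (f y).

Definition groupoid_isomorphic (S T : Type) (opS : S -> S -> S) (opT : T -> T -> T) : Prop :=
  exists f : S -> T, groupoid_iso opS opT f.

Definition dual_op (S : Type) (op : S -> S -> S) : S -> S -> S := fun x y => op y x.

Definition prod_op (S T : Type) (opS : S -> S -> S) (opT : T -> T -> T)
  : S * T -> S * T -> S * T :=
  fun p q => (opS p.1 q.1, opT p.2 q.2).

Definition Q1_op (x y : 'Z_5) : 'Z_5 := 4 * x + 2 * y.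

Definition Z25_op (a : 'Z_25) (x y : 'Z_25) : 'Z_25 := a * x + (1 - a) * y.

From mathcomp Require Import all_boot all_algebra.
Set Implicit Arguments. Unset Strict Implicit. Unset Printing Implicit Defensive.
Import GRing.Theory.
Local Open Scope ring_scope.

(* Every left multiplication L_y : x |-> y.x of Q1 or of its dual is affine
   with linear part beta = 2 or 4 and translation part alpha y, alpha = 4 or 2;
   since beta^4 = 1 and (1 + beta + beta^2 + beta^3) alpha = 0 in Z_5, all
   L_y^4 are the identity.  This identity survives direct products and
   isomorphisms.  In (Z_25, .) the map L_0 is x |-> (1 - a) x, and
   (1 - a)^4 = 6 for both roots a = 4, 22 of 2a^2 - 2a + 1. *)

Definition left_mul_periodic (T : Type) (n : nat) (op : T -> T -> T) : Prop :=
  forall x y : T, iter n (op y) x = x.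

Lemma eq_left_mul_periodic (T : Type) (n : nat) (op1 op2 : T -> T -> T) :
  op1 =2 op2 -> left_mul_periodic n op1 -> left_mul_periodic n op2.
Proof. by move=> eq_op per x y; rewrite -(eq_iter (eq_op y)). Qed.

Lemma iso_left_mul_periodic (S T : Type) (n : nat)
    (opS : S -> S -> S) (opT : T -> T -> T) :
  groupoid_isomorphic opS opT ->
  left_mul_periodic n opT -> left_mul_periodic n opS.
Proof.
move=> [f [[g fK _] f_hom]] perT x y; apply: (can_inj fK).
have -> : f (iter n (opS y) x) = iter n (opT (f y)) (f x).
  by elim: (n) => //= m IHm; rewrite f_hom IHm.
exact: perT.
Qed.

Lemma prod_left_mul_periodic (S T : Type) (n : nat)
    (opS : S -> S -> S) (opT : T -> T -> T) :
  left_mul_periodic n opS -> left_mul_periodic n opT ->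
  left_mul_periodic n (prod_op opS opT).
Proof.
move=> perS perT [x1 x2] [y1 y2].
have -> : iter n (prod_op opS opT (y1, y2)) (x1, x2)
          = (iter n (opS y1) x1, iter n (opT y2) x2).
  by elim: (n) => //= m ->.
by rewrite perS perT.
Qed.

Section AffineGroupoid.

Variables (R : pzRingType) (alpha beta : R).

Definition affine_op (x y : R) : R := alpha * x + beta * y.

Lemma iter_affine_op (n : nat) (x y : R) :
  iter n (affine_op y) x = beta ^+ n * x + (\sum_(i < n) beta ^+ i) * alpha * y.
Proof.
elim: n => [|n IHn] /=; first by rewrite expr0 big_ord0 mul1r !mul0r addr0.
have geomS : \sum_(i < n.+1) beta ^+ i = 1 + beta * \sum_(i < n) beta ^+ i.
  rewrite big_ord_recl expr0 mulr_sumr; congr (_ + _).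
  by apply: eq_bigr => i _; rewrite lift0 exprS.
by rewrite /affine_op IHn geomS exprS !mulrDr !mulrDl !mulrA mul1r addrCA.
Qed.

Lemma affine_left_mul_periodicP (n : nat) :
  left_mul_periodic n affine_op <->
  beta ^+ n = 1 /\ (\sum_(i < n) beta ^+ i) * alpha = 0.
Proof.
split=> [per | [beta_n sum_alpha] x y].
  have := per 1 0; have := per 0 1; rewrite !iter_affine_op.
  by rewrite !mulr0 !mulr1 add0r addr0 => ? ?.
by rewrite iter_affine_op beta_n sum_alpha mul1r mul0r addr0.
Qed.

End AffineGroupoid.

Lemma Q1_left_mul_periodic : left_mul_periodic 4 Q1_op.
Proof.
apply/(affine_left_mul_periodicP (4 : 'Z_5) 2).
by split; apply/eqP; rewrite // !big_ord_recr big_ord0.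
Qed.

Lemma dual_Q1_left_mul_periodic : left_mul_periodic 4 (dual_op Q1_op).
Proof.
apply: (@eq_left_mul_periodic _ _ (affine_op (2 : 'Z_5) 4)) => [x y|].
  by rewrite /affine_op /dual_op /Q1_op addrC.
apply/(affine_left_mul_periodicP (2 : 'Z_5) 4).
by split; apply/eqP; rewrite // !big_ord_recr big_ord0.
Qed.

Lemma Z25_quadratical_expr4_neq1 (a : 'Z_25) :
  2 * a ^+ 2 - 2 * a + 1 = 0 -> (1 - a) ^+ 4 != 1.
Proof.
move/eqP; apply: contraTN.
by case: a => [[|[|[|[|[|[|[|[|[|[|[|[|[|[|[|[|[|[|[|[|[|[|[|[|[|//]]]]]]]]]]]]]]]]]]]]]]]]] ?].
Qed.

Lemma Z25_quadratical_not_left_mul_periodic (a : 'Z_25) :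
  2 * a ^+ 2 - 2 * a + 1 = 0 -> ~ left_mul_periodic 4 (Z25_op a).
Proof.
move=> /Z25_quadratical_expr4_neq1 /eqP beta4_neq1.
by case/(affine_left_mul_periodicP a (1 - a)).
Qed.

Theorem theorem7p2 (a : 'Z_25) :
  2 * a ^+ 2 - 2 * a + 1 = 0 ->
  ~ groupoid_isomorphic (Z25_op a) (prod_op Q1_op Q1_op) /\
  ~ groupoid_isomorphic (Z25_op a) (prod_op Q1_op (dual_op Q1_op)) /\
  ~ groupoid_isomorphic (Z25_op a) (prod_op (dual_op Q1_op) Q1_op) /\
  ~ groupoid_isomorphic (Z25_op a) (prod_op (dual_op Q1_op) (dual_op Q1_op)).
Proof.
move=> quad; have not_per := Z25_quadratical_not_left_mul_periodic quad.
have not_iso T (opT : T -> T -> T) :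
    left_mul_periodic 4 opT -> ~ groupoid_isomorphic (Z25_op a) opT.
  by move=> perT iso; apply/not_per/(iso_left_mul_periodic iso).
have Q1 := Q1_left_mul_periodic; have Q1d := dual_Q1_left_mul_periodic.
by split; [|split; [|split]]; apply/not_iso/prod_left_mul_periodic.
Qed.
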